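(* Let $p_1,\dots,p_n\ge0$ with $\sum_ip_i=1$, integers $d_i\ge1$ with $\sum_ip_id_i>1$. For $\lambda\in(0,1)$ let $\bar F_\lambda$ solve $\bar F'(w)=\lambda\sum_{i=1}^np_i\bar F(w)^{d_i}-\bar F(w)$, $\bar F(0)=\lambda$. Define $\mathbb E[W^{(i)}_\lambda]=\int_0^\infty\bar F_\lambda(w)^{d_i}dw$, $\mathbb E[W_\lambda]=\sum_ip_i\mathbb E[W^{(i)}_\lambda]$, $\mathbb E[R^{(i)}_\lambda]=1+\mathbb E[W^{(i)}_\lambda]$, $\mathbb E[R_\lambda]=1+\mathbb E[W_\lambda]$. Then for every $i$, $$\lim_{\lambda\to1^-}-\frac{\mathbb E[R^{(i)}_\lambda]}{\log(1-\lambda)}=\lim_{\lambda\to1^-}-\frac{\mathbb E[R_\lambda]}{\log(1-\lambda)}=\lim_{\lambda\to1^-}-\frac{\mathbb E[W^{(i)}_\lambda]}{\log(1-\lambda)}=\lim_{\lambda\to1^-}-\frac{\mathbb E[W_\lambda]}{\log(1-\lambda)}=\frac1{\sum_{i=1}^np_id_i-1}.$$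
   Context: This models the LL($d_1,\dots,d_n,p_1,\dots,p_n$) policy: with probability $p_i$ a job is sent to the least loaded of $d_i$ randomly sampled servers; job sizes exponential with mean 1. *)

From Stdlib Require Import Reals.
From Coquelicot Require Import Coquelicot.
Open Scope R_scope.

Fixpoint sumR (n : nat) (f : nat -> R) : R :=
  match n with
  | O => 0
  | S k => sumR k f + f k
  end.

Definition solves_ode (n : nat) (p : nat -> R) (d : nat -> nat) (lam : R)
  (F : R -> R) : Prop :=
  F 0 = lam /\
  filterlim F (at_right 0) (locally lam) /\
  (forall w, 0 < w ->
     is_derive F w (lam * sumR n (fun i => p i * F w ^ d i) - F w)).

Definition EWi (F : R -> R) (di : nat) : R :=
  RInt_gen (fun w => F w ^ di) (at_point 0) (Rbar_locally p_infty).

Definition EW (n : nat) (p : nat -> R) (d : nat -> nat) (F : R -> R) : R :=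
  sumR n (fun i => p i * EWi F (d i)).

Definition ERi (F : R -> R) (di : nat) : R := 1 + EWi F di.
Definition ER (n : nat) (p : nat -> R) (d : nat -> nat) (F : R -> R) : R :=
  1 + EW n p d F.

From Stdlib Require Import Reals Lra Lia Classical.
From Coquelicot Require Import Coquelicot.
Open Scope R_scope.

(* Write f(x) = sum_i p_i x^(d_i) and m = f'(1) = sum_i p_i d_i > 1.  The tail
   F of the workload solves F' = lam f(F) - F, F(0) = lam, and the theorem says
   int_0^oo F^k ~ -ln(1 - lam)/(m - 1) as lam -> 1-, for every 1 <= k <= max d_i.

   1. Elementary estimates of the gap x - f(x) on [0,1]: it is at most
      (m-1)(1-x), at least (m-1)(1-x)x^K near 1 and (m-1)x(1-x)/K everywhere.
   2. Calculus tools: monotonicity from the sign of a derivative, positivity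
      for linear ODEs, Gronwall's inequality, an integral bound by a potential,
      and improper integrals of nonnegative functions as suprema.
   3. For a fixed lam: 0 < F < 1; Gronwall gives 1 - F(w) <= C (1-lam) e^((m-1)w),
      so F^k stays close to 1 up to time ~ -ln(1-lam)/(m-1) (lower bound); a
      potential psi with d/dt psi(F) <= -F bounds int F (upper bound).
   4. Both bounds are recast as "E lam = (1 +- eta) L (-ln(1-lam)) + O(1) for
      every eta" (log_order), a property stable under adding constants and
      under convex combinations, and which implies the limit; the theorem
      follows for E[W^(i)], E[W] and E[R^(i)] = 1 + E[W^(i)], E[R] = 1 + E[W]. *)

Lemma sumR_ext (n : nat) (f g : nat -> R) :
  (forall i, (i < n)%nat -> f i = g i) -> sumR n f = sumR n g.
Proof.
  induction n as [|n IH]; intros H; simpl; [reflexivity|].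
  rewrite IH by (intros; apply H; lia). rewrite H by lia; reflexivity.
Qed.

Lemma sumR_le (n : nat) (f g : nat -> R) :
  (forall i, (i < n)%nat -> f i <= g i) -> sumR n f <= sumR n g.
Proof.
  induction n as [|n IH]; intros H; simpl; [lra|].
  apply Rplus_le_compat; [apply IH; intros; apply H|apply H]; lia.
Qed.

Lemma sumR_nonneg (n : nat) (f : nat -> R) :
  (forall i, (i < n)%nat -> 0 <= f i) -> 0 <= sumR n f.
Proof.
  induction n as [|n IH]; intros H; simpl; [lra|].
  assert (0 <= sumR n f) by (apply IH; intros; apply H; lia).
  assert (0 <= f n) by (apply H; lia). lra.
Qed.

Lemma sumR_scal (n : nat) (c : R) (f : nat -> R) :
  sumR n (fun i => c * f i) = c * sumR n f.
Proof. induction n as [|n IH]; simpl; [ring|]. rewrite IH; ring. Qed.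

Lemma sumR_plus (n : nat) (f g : nat -> R) :
  sumR n (fun i => f i + g i) = sumR n f + sumR n g.
Proof. induction n as [|n IH]; simpl; [ring|]. rewrite IH; ring. Qed.

Lemma sumR_minus (n : nat) (f g : nat -> R) :
  sumR n (fun i => f i - g i) = sumR n f - sumR n g.
Proof. induction n as [|n IH]; simpl; [ring|]. rewrite IH; ring. Qed.

Lemma sumR_weights (n : nat) (p : nat -> R) (c : R) :
  sumR n p = 1 -> sumR n (fun i => p i * c) = c.
Proof.
  intros Hs. rewrite (sumR_ext n _ (fun i => c * p i)) by (intros; ring).
  rewrite sumR_scal, Hs; ring.
Qed.

Lemma sumR_continuous (n : nat) (G : nat -> R -> R) (x : R) :
  (forall i, (i < n)%nat -> continuous (G i) x) ->
  continuous (fun w => sumR n (fun i => G i w)) x.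
Proof.
  induction n as [|n IH]; intros H; simpl.
  - apply continuous_const.
  - apply (continuous_plus (fun w => sumR n (fun i => G i w)) (G n) x);
      [apply IH; intros; apply H|apply H]; lia.
Qed.

Lemma finite_choice (n : nat) (Q : nat -> R -> Prop) :
  (forall i, (i < n)%nat -> exists c, Q i c) ->
  exists c : nat -> R, forall i, (i < n)%nat -> Q i (c i).
Proof.
  induction n as [|n IH]; intros H.
  - exists (fun _ => 0). intros; lia.
  - destruct IH as [c Hc]; [intros; apply H; lia|].
    destruct (H n ltac:(lia)) as [cn Hcn].
    exists (fun i => if Nat.eq_dec i n then cn else c i). intros i Hi.
    destruct (Nat.eq_dec i n) as [->|Hne]; [exact Hcn|apply Hc; lia].
Qed.

Lemma pow_antimono (x : R) (a b : nat) :
  0 <= x <= 1 -> (a <= b)%nat -> x ^ b <= x ^ a.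
Proof.
  intros Hx Hab. induction Hab as [|b Hab IH]; [lra|].
  simpl. assert (0 <= x ^ b) by (apply pow_le; lra). nra.
Qed.

Lemma bernoulli_minus (x : R) (k : nat) :
  0 <= x <= 1 -> 1 - INR k * x <= (1 - x) ^ k.
Proof.
  intros Hx. induction k as [|k IH]; [simpl; lra|].
  rewrite S_INR. change ((1 - x) ^ S k) with ((1 - x) * (1 - x) ^ k).
  assert (0 <= INR k) by apply pos_INR. nra.
Qed.

Lemma monomial_gap_upper (x : R) (k : nat) :
  0 <= x <= 1 -> x - x ^ S k <= INR k * (1 - x).
Proof.
  intros Hx. assert (H := bernoulli_minus (1 - x) (S k) ltac:(lra)).
  replace (1 - (1 - x)) with x in H by ring. rewrite S_INR in H. simpl in *. nra.
Qed.

Lemma monomial_gap_lower (x : R) (k : nat) :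
  0 <= x <= 1 -> (1 - x) * x ^ k * INR k <= x - x ^ S k.
Proof.
  intros Hx. induction k as [|k IH]; [simpl; lra|].
  rewrite S_INR.
  assert (x ^ S k <= x ^ k) by (apply pow_antimono; auto).
  assert (0 <= x ^ S k) by (apply pow_le; lra).
  assert (0 <= INR k) by apply pos_INR.
  assert ((1 - x) * x ^ S k * INR k <= (1 - x) * x ^ k * INR k).
  { apply Rmult_le_compat_r; auto. apply Rmult_le_compat_l; lra. }
  change (x ^ S (S k)) with (x * x ^ S k). nra.
Qed.

Lemma monomial_gap_lower_uniform (x : R) (k K : nat) :
  0 <= x <= 1 -> (k <= K)%nat -> (1 <= K)%nat ->
  x * (1 - x) * INR k / INR K <= x - x ^ S k.
Proof.
  intros Hx HkK HK.
  assert (HKp : 0 < INR K) by (apply lt_0_INR; lia).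
  assert (Hr : 0 <= INR k / INR K <= 1).
  { split; [apply Rdiv_le_0_compat; [apply pos_INR|lra]|].
    assert (INR k <= INR K) by (apply le_INR; auto).
    apply (Rmult_le_reg_r (INR K)); [lra|].
    unfold Rdiv. rewrite Rmult_assoc, Rinv_l; lra. }
  destruct k as [|k].
  - simpl. unfold Rdiv. rewrite Rmult_0_r, Rmult_0_l. lra.
  - assert (x ^ S (S k) <= x ^ 2) by (apply pow_antimono; auto; lia).
    assert (0 <= x * (1 - x)) by nra.
    unfold Rdiv in *. rewrite Rmult_assoc. simpl in *. nra.
Qed.

Definition geom (k : nat) (x : R) : R := sumR k (fun j => x ^ S j).

Lemma geom_gap (k : nat) (x : R) : x - x ^ S k = (1 - x) * geom k x.
Proof.
  unfold geom. induction k as [|k IH]; simpl in *; [ring|].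
  rewrite Rmult_plus_distr_l, <- IH. ring.
Qed.

(* The generating polynomial [f(x) = sum_i p_i x^(d_i)]: a job samples [d_i]
   servers with probability [p_i]. *)
Definition gen (n : nat) (p : nat -> R) (d : nat -> nat) (x : R) : R :=
  sumR n (fun i => p i * x ^ d i).

(* [m = f'(1) = sum_i p_i d_i], the mean number of sampled servers. *)
Definition mean (n : nat) (p : nat -> R) (d : nat -> nat) : R :=
  sumR n (fun i => p i * INR (d i)).

Section GeneratingPolynomial.

Variables (n : nat) (p : nat -> R) (d : nat -> nat) (K : nat).
Hypothesis p_nonneg : forall i, (i < n)%nat -> 0 <= p i.
Hypothesis p_sum : sumR n p = 1.
Hypothesis d_range : forall i, (i < n)%nat -> (1 <= d i <= K)%nat.

Let f := gen n p d.
Let m := mean n p d.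

Lemma gen_gap (x : R) : x - f x = sumR n (fun i => p i * (x - x ^ d i)).
Proof.
  unfold f, gen.
  rewrite (sumR_ext n (fun i => p i * (x - x ^ d i))
             (fun i => x * p i - p i * x ^ d i)) by (intros; ring).
  rewrite sumR_minus, sumR_scal, p_sum. ring.
Qed.

Lemma mean_minus_one : m - 1 = sumR n (fun i => p i * INR (Nat.pred (d i))).
Proof.
  unfold m, mean. rewrite <- (sumR_weights n p 1 p_sum).
  rewrite <- sumR_minus. apply sumR_ext. intros i Hi.
  destruct (d_range i Hi) as [H1 _]. destruct (d i) as [|k]; [lia|].
  rewrite S_INR. simpl Nat.pred. ring.
Qed.

Lemma gap_compare (x : R) (est : nat -> R) :
  (forall k, (S k <= K)%nat -> est k <= x - x ^ S k) ->
  sumR n (fun i => p i * est (Nat.pred (d i))) <= x - f x.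
Proof.
  intros Hest. rewrite gen_gap. apply sumR_le. intros i Hi.
  destruct (d_range i Hi) as [H1 H2]. destruct (d i) as [|k]; [lia|].
  apply Rmult_le_compat_l; [auto|]. apply Hest; lia.
Qed.

Lemma gen_nonneg (x : R) : 0 <= x -> 0 <= f x.
Proof.
  intros Hx. apply sumR_nonneg. intros i Hi.
  apply Rmult_le_pos; [auto|apply pow_le; lra].
Qed.

Lemma gen_le_id (x : R) : 0 <= x <= 1 -> f x <= x.
Proof.
  intros Hx. enough (0 <= x - f x) by lra. rewrite gen_gap.
  apply sumR_nonneg. intros i Hi. apply Rmult_le_pos; [auto|].
  assert (x ^ d i <= x ^ 1) by (apply pow_antimono; [|apply d_range]; auto).
  simpl in *. lra.
Qed.

Lemma gen_ge_pow (x : R) : 0 <= x <= 1 -> x ^ S K <= f x.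
Proof.
  intros Hx. rewrite <- (sumR_weights n p (x ^ S K)) by exact p_sum.
  apply sumR_le. intros i Hi. apply Rmult_le_compat_l; [auto|].
  apply pow_antimono; [auto|]. destruct (d_range i Hi); lia.
Qed.

Lemma gap_upper (x : R) : 0 <= x <= 1 -> x - f x <= (m - 1) * (1 - x).
Proof.
  intros Hx. rewrite gen_gap, mean_minus_one, Rmult_comm, <- sumR_scal.
  apply sumR_le. intros i Hi. destruct (d_range i Hi) as [H1 _].
  destruct (d i) as [|k]; [lia|]. simpl Nat.pred.
  assert (H := monomial_gap_upper x k Hx).
  specialize (p_nonneg i Hi). nra.
Qed.

Lemma gap_lower_near_one (x : R) :
  0 <= x <= 1 -> (1 - x) * x ^ K * (m - 1) <= x - f x.
Proof.
  intros Hx. rewrite mean_minus_one, <- sumR_scal.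
  rewrite (sumR_ext n _ (fun i => p i * ((1 - x) * x ^ K * INR (Nat.pred (d i)))))
    by (intros; ring).
  apply (gap_compare x (fun k => (1 - x) * x ^ K * INR k)). intros k Hk.
  eapply Rle_trans; [|apply (monomial_gap_lower x k Hx)].
  assert (x ^ K <= x ^ k) by (apply pow_antimono; [auto|lia]).
  assert (0 <= INR k) by apply pos_INR.
  apply Rmult_le_compat_r; [auto|]. apply Rmult_le_compat_l; lra.
Qed.

Lemma gap_lower_uniform (x : R) :
  (1 <= K)%nat -> 0 <= x <= 1 -> x * (1 - x) * (m - 1) / INR K <= x - f x.
Proof.
  intros HK Hx. rewrite mean_minus_one.
  replace (x * (1 - x) * sumR n (fun i => p i * INR (Nat.pred (d i))) / INR K)
    with (sumR n (fun i => p i * (x * (1 - x) * INR (Nat.pred (d i)) / INR K))).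
  - apply (gap_compare x (fun k => x * (1 - x) * INR k / INR K)). intros k Hk.
    apply monomial_gap_lower_uniform; auto; lia.
  - rewrite (sumR_ext n _ (fun i => (x * (1 - x) / INR K) * (p i * INR (Nat.pred (d i)))))
      by (intros; unfold Rdiv; ring).
    rewrite sumR_scal. unfold Rdiv. ring.
Qed.

(* Factorisations [f x = x g(x)] and [x - f x = (1 - x) q(x)] with continuous
   polynomials [g], [q]; they exhibit the ODE as linear in [F] and [1 - F]. *)
Lemma gen_factor (x : R) :
  f x = x * sumR n (fun i => p i * x ^ Nat.pred (d i)).
Proof.
  unfold f, gen. rewrite <- sumR_scal. apply sumR_ext. intros i Hi.
  destruct (d_range i Hi) as [H1 _]. destruct (d i); [lia|]. simpl. ring.
Qed.

Lemma gap_factor (x : R) :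
  x - f x = (1 - x) * sumR n (fun i => p i * geom (Nat.pred (d i)) x).
Proof.
  rewrite gen_gap, <- sumR_scal. apply sumR_ext. intros i Hi.
  destruct (d_range i Hi) as [H1 _]. destruct (d i); [lia|].
  simpl Nat.pred. rewrite geom_gap. ring.
Qed.

End GeneratingPolynomial.

Lemma is_derive_Rplus (f g : R -> R) (x df dg : R) :
  is_derive f x df -> is_derive g x dg -> is_derive (fun t => f t + g t) x (df + dg).
Proof. intros Hf Hg. exact (is_derive_plus f g x df dg Hf Hg). Qed.

Lemma is_derive_Rminus (f g : R -> R) (x df dg : R) :
  is_derive f x df -> is_derive g x dg -> is_derive (fun t => f t - g t) x (df - dg).
Proof. intros Hf Hg. exact (is_derive_minus f g x df dg Hf Hg). Qed.

Lemma is_derive_Rmult (f g : R -> R) (x df dg : R) :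
  is_derive f x df -> is_derive g x dg ->
  is_derive (fun t => f t * g t) x (df * g x + f x * dg).
Proof. intros Hf Hg. exact (is_derive_mult f g x df dg Hf Hg Rmult_comm). Qed.

Lemma is_derive_Rcomp (f g : R -> R) (x df dg : R) :
  is_derive f (g x) df -> is_derive g x dg -> is_derive (fun t => f (g t)) x (dg * df).
Proof. intros Hf Hg. exact (is_derive_comp f g x df dg Hf Hg). Qed.

Lemma is_derive_Rconst (a x : R) : is_derive (fun _ : R => a) x 0.
Proof. exact (is_derive_const a x). Qed.

Lemma is_derive_value (f : R -> R) (x l l' : R) :
  is_derive f x l -> l = l' -> is_derive f x l'.
Proof. now intros H <-. Qed.

Lemma is_derive_continuous (f : R -> R) (x l : R) : is_derive f x l -> continuous f x.
Proof. intros H. apply (ex_derive_continuous f x). now exists l. Qed.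

Lemma continuous_Rscal (c : R) (f : R -> R) (x : R) :
  continuous f x -> continuous (fun t => c * f t) x.
Proof. intros H. exact (continuous_mult (fun _ => c) f x (continuous_const c x) H). Qed.

Lemma continuous_Rpow (f : R -> R) (k : nat) (x : R) :
  continuous f x -> continuous (fun t => f t ^ k) x.
Proof.
  intros H. induction k as [|k IH]; simpl.
  - apply continuous_const.
  - exact (continuous_mult f (fun t => f t ^ k) x H IH).
Qed.

Lemma exp_le_compat (x y : R) : x <= y -> exp x <= exp y.
Proof.
  intros [Hlt|Heq]; [apply Rlt_le, exp_increasing, Hlt|rewrite Heq; apply Rle_refl].
Qed.

Lemma nondecreasing_of_derive (f df : R -> R) (a b : R) : a <= b ->
  (forall x, a <= x <= b -> is_derive f x (df x)) ->
  (forall x, a <= x <= b -> 0 <= df x) -> f a <= f b.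
Proof.
  intros Hab Hd Hpos.
  destruct (MVT_gen f a b df) as [c [Hc Heq]];
    rewrite ?Rmin_left, ?Rmax_right in * by lra.
  - intros x Hx. apply Hd. lra.
  - intros x Hx. apply continuity_pt_filterlim.
    apply (is_derive_continuous f x (df x)). apply Hd. lra.
  - assert (0 <= df c * (b - a)) by (apply Rmult_le_pos; [apply Hpos|]; lra). lra.
Qed.

Lemma nonincreasing_of_derive (f df : R -> R) (a b : R) : a <= b ->
  (forall x, a <= x <= b -> is_derive f x (df x)) ->
  (forall x, a <= x <= b -> df x <= 0) -> f b <= f a.
Proof.
  intros Hab Hd Hneg.
  enough (- f a <= - f b) by lra.
  apply (nondecreasing_of_derive (fun t => - f t) (fun t => - df t) a b Hab).
  - intros x Hx. apply (is_derive_opp f x (df x)). now apply Hd.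
  - intros x Hx. specialize (Hneg x Hx). lra.
Qed.

Lemma RInt_const_R (a b c : R) : RInt (fun _ => c) a b = (b - a) * c.
Proof. rewrite RInt_const. reflexivity. Qed.

Lemma ex_RInt_pos (g : R -> R) (a b : R) : 0 < a -> 0 < b ->
  (forall x, 0 < x -> continuous g x) -> ex_RInt g a b.
Proof.
  intros Ha Hb Hc. apply (@ex_RInt_continuous R_CompleteNormedModule). intros z Hz. apply Hc.
  assert (0 < Rmin a b) by (apply Rmin_glb_lt; auto). lra.
Qed.

Lemma is_derive_RInt_pos (g : R -> R) (s x : R) : 0 < s -> 0 < x ->
  (forall x, 0 < x -> continuous g x) -> is_derive (fun t => RInt g s t) x (g x).
Proof.
  intros Hs Hx Hc. apply (is_derive_RInt g (fun t => RInt g s t) s x); [|now apply Hc].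
  assert (Hx2 : 0 < x / 2) by lra. exists (mkposreal _ Hx2). intros b Hb.
  change (Rabs (b - x) < x / 2) in Hb. apply Rabs_def2 in Hb.
  apply (@RInt_correct R_CompleteNormedModule), ex_RInt_pos; auto; lra.
Qed.

(* Positivity is propagated forward by a linear ODE [y' = al y + be] with
   continuous coefficient [al] and nonnegative forcing [be]
   (integrating factor [exp (- int al)]). *)
Lemma linear_ode_positive (y al be : R -> R) (s w : R) : 0 < s <= w ->
  (forall x, 0 < x -> continuous al x) ->
  (forall x, 0 < x -> is_derive y x (al x * y x + be x)) ->
  (forall x, 0 < x -> 0 <= be x) -> 0 < y s -> 0 < y w.
Proof.
  intros Hsw Hc Hy Hbe Hys.
  set (A := fun t => RInt al s t).
  assert (HA0 : A s = 0) by exact (RInt_point s al).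
  assert (Hz : y s * exp (- A s) <= y w * exp (- A w)).
  { apply (nondecreasing_of_derive (fun t => y t * exp (- A t))
             (fun t => be t * exp (- A t)) s w); [lra| |].
    - intros x Hx.
      assert (HAx : is_derive (fun t => - A t) x (- al x)).
      { apply (is_derive_opp A x (al x)). apply is_derive_RInt_pos; auto; lra. }
      assert (He := is_derive_Rcomp exp (fun t => - A t) x _ _ (is_derive_exp _) HAx).
      apply (is_derive_value _ _ _ _ (is_derive_Rmult _ _ x _ _ (Hy x ltac:(lra)) He)).
      ring.
    - intros x Hx. apply Rmult_le_pos; [apply Hbe; lra|apply Rlt_le, exp_pos]. }
  rewrite HA0, Ropp_0, exp_0, Rmult_1_r in Hz.
  assert (0 < exp (- A w)) by apply exp_pos. nra.
Qed.

Lemma linear_gronwall (y dy : R -> R) (b c s w : R) : 0 < b -> s <= w ->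
  (forall x, s <= x <= w -> is_derive y x (dy x)) ->
  (forall x, s <= x <= w -> dy x <= b * y x + c) ->
  y w + c / b <= (y s + c / b) * exp (b * (w - s)).
Proof.
  intros Hb Hsw Hd Hdy.
  assert (Hz : (y w + c / b) * exp (- (b * w)) <= (y s + c / b) * exp (- (b * s))).
  { apply (nonincreasing_of_derive (fun t => (y t + c / b) * exp (- (b * t)))
             (fun t => (dy t - b * y t - c) * exp (- (b * t))) s w Hsw).
    - intros x Hx.
      assert (Hl : is_derive (fun t => - (b * t)) x (- b)) by (auto_derive; auto; ring).
      assert (He := is_derive_Rcomp exp _ x _ _ (is_derive_exp _) Hl).
      assert (Hyc := is_derive_Rplus y (fun _ => c / b) x _ _ (Hd x Hx) (is_derive_Rconst _ x)).
      apply (is_derive_value _ _ _ _ (is_derive_Rmult _ _ x _ _ Hyc He)).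
      field. lra.
    - intros x Hx. assert (dy x - b * y x - c <= 0) by (specialize (Hdy x Hx); lra).
      assert (0 < exp (- (b * x))) by apply exp_pos. nra. }
  replace (b * (w - s)) with (b * w + - (b * s)) by ring.
  rewrite exp_plus.
  assert (Hew : exp (- (b * w)) * exp (b * w) = 1) by (rewrite <- exp_plus, <- exp_0; f_equal; ring).
  assert (0 < exp (b * w)) by apply exp_pos.
  replace (y w + c / b) with ((y w + c / b) * exp (- (b * w)) * exp (b * w))
    by (rewrite Rmult_assoc, Hew; ring).
  replace ((y s + c / b) * (exp (b * w) * exp (- (b * s))))
    with ((y s + c / b) * exp (- (b * s)) * exp (b * w)) by ring.
  apply Rmult_le_compat_r; lra.
Qed.

Lemma RInt_le_potential (g phi dphi : R -> R) (a b : R) : 0 < a <= b ->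
  (forall x, 0 < x -> continuous g x) ->
  (forall x, a <= x <= b -> is_derive phi x (dphi x)) ->
  (forall x, a <= x <= b -> dphi x <= - g x) ->
  RInt g a b <= phi a - phi b.
Proof.
  intros Hab Hc Hd Hle.
  assert (Hmono : RInt g a b + phi b <= RInt g a a + phi a).
  { apply (nonincreasing_of_derive (fun t => RInt g a t + phi t)
             (fun t => g t + dphi t) a b); [lra| |].
    - intros x Hx. apply is_derive_Rplus; [apply is_derive_RInt_pos; auto; lra|auto].
    - intros x Hx. specialize (Hle x Hx). lra. }
  rewrite RInt_point in Hmono. change zero with 0 in Hmono. lra.
Qed.

(* A function continuous on (0,oo) and right-continuous at 0 is integrable on
   every [0,W]: extend it by the constant [g 0] to the left of 0. *)
Lemma ex_RInt_right_continuous (g : R -> R) (W : R) : 0 <= W ->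
  (forall x, 0 < x -> continuous g x) ->
  filterlim g (at_right 0) (locally (g 0)) -> ex_RInt g 0 W.
Proof.
  intros HW Hc H0.
  set (h := fun t => if Rlt_dec 0 t then g t else g 0).
  apply (ex_RInt_ext h).
  { intros x Hx. rewrite Rmin_left, Rmax_right in Hx by lra.
    unfold h. destruct (Rlt_dec 0 x); [reflexivity|lra]. }
  apply (@ex_RInt_continuous R_CompleteNormedModule). intros z Hz.
  rewrite Rmin_left, Rmax_right in Hz by lra.
  destruct (Rle_lt_or_eq_dec 0 z (proj1 Hz)) as [Hz0|<-].
  - apply (continuous_ext_loc _ g); [|now apply Hc].
    assert (Hz2 : 0 < z / 2) by lra. exists (mkposreal _ Hz2). intros y Hy.
    change (Rabs (y - z) < z / 2) in Hy. apply Rabs_def2 in Hy.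
    unfold h. destruct (Rlt_dec 0 y); [reflexivity|lra].
  - assert (Hh0 : h 0 = g 0) by (unfold h; destruct (Rlt_dec 0 0); [lra|reflexivity]).
    intros P [e He]. rewrite Hh0 in He. unfold filtermap.
    destruct (proj1 (filterlim_locally g (g 0)) H0 e) as [del Hdel].
    exists del. intros y Hy. unfold h. destruct (Rlt_dec 0 y) as [Hy0|Hy0].
    + apply He, Hdel; auto.
    + apply He, ball_center.
Qed.

Lemma RInt_partial_mono (g : R -> R) :
  (forall x, 0 < x -> 0 <= g x) ->
  (forall W, 0 <= W -> ex_RInt g 0 W) ->
  forall W1 W2, 0 <= W1 <= W2 -> RInt g 0 W1 <= RInt g 0 W2.
Proof.
  intros Hpos Hex W1 W2 HW.
  assert (H12 : ex_RInt g W1 W2)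
    by (apply (ex_RInt_Chasles_2 g 0); [lra|apply Hex; lra]).
  rewrite <- (RInt_Chasles g 0 W1 W2) by (auto; apply Hex; lra).
  assert (0 <= RInt g W1 W2) by (apply RInt_ge_0; auto; [lra|intros; apply Hpos; lra]).
  change plus with Rplus. lra.
Qed.

Lemma RInt_gen_nonneg_sup (g : R -> R) :
  (forall x, 0 < x -> 0 <= g x) ->
  (forall W, 0 <= W -> ex_RInt g 0 W) ->
  (exists B, forall W, 0 <= W -> RInt g 0 W <= B) ->
  let I := RInt_gen g (at_point 0) (Rbar_locally p_infty) in
  (forall W, 0 <= W -> RInt g 0 W <= I) /\
  (forall B, (forall W, 0 <= W -> RInt g 0 W <= B) -> I <= B).
Proof.
  intros Hpos Hex [B HB] I.
  set (S := fun v => exists W, 0 <= W /\ v = RInt g 0 W).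
  assert (Hmono := RInt_partial_mono g Hpos Hex).
  destruct (completeness S) as [l [Hub Hleast]].
  { exists B. intros v [W [HW ->]]. auto. }
  { exists (RInt g 0 0). exists 0. split; [lra|reflexivity]. }
  assert (Hlim : is_RInt_gen g (at_point 0) (Rbar_locally p_infty) l).
  { intros P [eps Heps]. unfold filtermapi.
    assert (Hnear : exists W0, 0 <= W0 /\ l - eps < RInt g 0 W0).
    { apply NNPP. intros Hn.
      assert (l <= l - eps); [|destruct eps; simpl in *; lra].
      apply Hleast. intros v [W [HW ->]]. apply Rnot_lt_le. intros Hlt.
      apply Hn. now exists W. }
    destruct Hnear as [W0 [HW0 Hl0]].
    apply (Filter_prod _ _ _ (fun a => a = 0) (fun b => W0 < b)); [reflexivity|now exists W0|].
    intros a b -> Hb. exists (RInt g 0 b). split.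
    - apply (@RInt_correct R_CompleteNormedModule), Hex. lra.
    - apply Heps. change (Rabs (RInt g 0 b - l) < eps).
      assert (RInt g 0 W0 <= RInt g 0 b) by (apply Hmono; lra).
      assert (RInt g 0 b <= l) by (apply Hub; exists b; split; [lra|reflexivity]).
      apply Rabs_def1; lra. }
  assert (HI : I = l) by apply (is_RInt_gen_unique _ _ Hlim).
  rewrite HI. split.
  - intros W HW. apply Hub. now exists W.
  - intros B' HB'. apply Hleast. intros v [W [HW ->]]. auto.
Qed.

Section Solution.

Variables (n : nat) (p : nat -> R) (d : nat -> nat) (K : nat).
Hypothesis p_nonneg : forall i, (i < n)%nat -> 0 <= p i.
Hypothesis p_sum : sumR n p = 1.
Hypothesis d_range : forall i, (i < n)%nat -> (1 <= d i <= K)%nat.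
Hypothesis K_pos : (1 <= K)%nat.
Hypothesis mean_gt_one : mean n p d > 1.

Variables (lam : R) (F : R -> R).
Hypothesis lam_range : 0 < lam < 1.
Hypothesis F_ode : solves_ode n p d lam F.

Let f := gen n p d.
Let m := mean n p d.

Lemma F_derive (x : R) : 0 < x -> is_derive F x (lam * f (F x) - F x).
Proof. intros Hx. now apply F_ode. Qed.

Lemma F_continuous (x : R) : 0 < x -> continuous F x.
Proof. intros Hx. exact (is_derive_continuous _ _ _ (F_derive x Hx)). Qed.

Lemma F_near_initial (e : posreal) (w : R) : 0 < w ->
  exists s, 0 < s <= w /\ Rabs (F s - lam) < e.
Proof.
  intros Hw. destruct F_ode as [_ [Hlim _]].
  destruct (proj1 (filterlim_locally F lam) Hlim e) as [del Hdel].
  set (s := Rmin w (del / 2)).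
  assert (Hs : 0 < s <= w) by (split; [apply Rmin_glb_lt; destruct del; simpl; lra|apply Rmin_l]).
  exists s. split; [exact Hs|]. apply (Hdel s); [|tauto].
  change (Rabs (s - 0) < del). assert (s <= del / 2) by apply Rmin_r.
  rewrite Rminus_0_r, Rabs_right; destruct del; simpl in *; lra.
Qed.

Lemma F_pos (w : R) : 0 < w -> 0 < F w.
Proof.
  intros Hw. assert (He : 0 < lam) by lra.
  destruct (F_near_initial (mkposreal _ He) w Hw) as [s [Hs Hfs]].
  simpl in Hfs. apply Rabs_def2 in Hfs.
  apply (linear_ode_positive F
           (fun x => lam * sumR n (fun i => p i * F x ^ Nat.pred (d i)) - 1)
           (fun _ => 0) s w); [lra| | |intros; lra|lra].
  - intros x Hx. apply (continuous_minus _ (fun _ => 1)); [|apply continuous_const].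
    apply (continuous_Rscal lam).
    apply (sumR_continuous n (fun i x => p i * F x ^ Nat.pred (d i))). intros i Hi.
    apply (continuous_Rscal (p i)), continuous_Rpow, F_continuous, Hx.
  - intros x Hx. apply (is_derive_value _ _ _ _ (F_derive x Hx)).
    unfold f. rewrite (gen_factor n p d K) by auto. ring.
Qed.

Lemma F_lt_one (w : R) : 0 < w -> F w < 1.
Proof.
  intros Hw. assert (He : 0 < 1 - lam) by lra.
  destruct (F_near_initial (mkposreal _ He) w Hw) as [s [Hs Hfs]].
  simpl in Hfs. apply Rabs_def2 in Hfs.
  enough (0 < 1 - F w) by lra.
  apply (linear_ode_positive (fun t => 1 - F t)
           (fun x => sumR n (fun i => p i * geom (Nat.pred (d i)) (F x)))
           (fun x => (1 - lam) * f (F x)) s w); [lra| | | |lra].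
  - intros x Hx.
    apply (sumR_continuous n (fun i x => p i * geom (Nat.pred (d i)) (F x))). intros i Hi.
    apply (continuous_Rscal (p i)). unfold geom.
    apply (sumR_continuous _ (fun j x => F x ^ S j)). intros j Hj.
    apply continuous_Rpow, F_continuous, Hx.
  - intros x Hx.
    apply (is_derive_value _ _ _ _
             (is_derive_Rminus _ _ x _ _ (is_derive_Rconst 1 x) (F_derive x Hx))).
    assert (Hq : F x - f (F x) =
              (1 - F x) * sumR n (fun i => p i * geom (Nat.pred (d i)) (F x)))
      by (apply (gap_factor n p d K); auto).
    lra.
  - intros x Hx. apply Rmult_le_pos; [lra|].
    apply (gen_nonneg n p d); [auto|]. apply Rlt_le, F_pos, Hx.
Qed.

(* Gronwall bound: [F] stays near 1 for times up to about [-ln(1-lam)/(m-1)]. *)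
Lemma one_minus_F_bound (w : R) : 0 < w ->
  1 - F w <= (1 - lam) * (2 + / (m - 1)) * exp ((m - 1) * w).
Proof.
  intros Hw. set (c := 1 - lam). set (b := m - 1).
  assert (Hc : 0 < c) by (unfold c; lra). assert (Hb : 0 < b) by (unfold b, m; lra).
  destruct (F_near_initial (mkposreal c Hc) w Hw) as [s [Hs Hfs]].
  simpl in Hfs. apply Rabs_def2 in Hfs.
  assert (Hg := linear_gronwall (fun t => 1 - F t) (fun t => F t - lam * f (F t))
                  b c s w Hb (proj2 Hs)).
  simpl in Hg.
  assert (Hbound : 1 - F w + c / b <= (1 - F s + c / b) * exp (b * (w - s))).
  { apply Hg.
    - intros x Hx.
      apply (is_derive_value _ _ _ _
               (is_derive_Rminus _ _ x _ _ (is_derive_Rconst 1 x) (F_derive x ltac:(lra)))).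
      ring.
    - intros x Hx. assert (HF : 0 <= F x <= 1)
        by (split; [apply Rlt_le, F_pos|apply Rlt_le, F_lt_one]; lra).
      assert (Hgap : F x - f (F x) <= b * (1 - F x)) by (apply (gap_upper n p d K); auto).
      assert (Hf1 : f (F x) <= F x) by (apply (gen_le_id n p d K); auto).
      assert (Hf0 : 0 <= f (F x)) by (apply (gen_nonneg n p d); auto; lra).
      assert (c * f (F x) <= c * 1) by (apply Rmult_le_compat_l; lra).
      unfold c in *. lra. }
  assert (Hexp : exp (b * (w - s)) <= exp (b * w)).
  { apply exp_le_compat. apply Rmult_le_compat_l; lra. }
  assert (Hcb : 0 < c / b) by (apply Rdiv_lt_0_compat; lra).
  assert (0 < exp (b * (w - s))) by apply exp_pos.
  assert ((1 - F s + c / b) * exp (b * (w - s)) <= (2 * c + c / b) * exp (b * w)).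
  { assert (1 - F s < 2 * c) by (unfold c in *; lra).
    assert (F s < 1) by (apply F_lt_one; lra).
    apply Rmult_le_compat; lra. }
  assert (1 <= exp (b * w)) by (rewrite <- exp_0; apply exp_le_compat; apply Rmult_le_pos; lra).
  replace (c * (2 + / b)) with (2 * c + c / b) by (field; lra).
  nra.
Qed.

Lemma F_pow_integrable (k : nat) (W : R) : 0 <= W -> ex_RInt (fun w => F w ^ k) 0 W.
Proof.
  intros HW. apply ex_RInt_right_continuous; [exact HW| |].
  - intros x Hx. apply continuous_Rpow, F_continuous, Hx.
  - destruct F_ode as [HF0 [Hlim _]]. rewrite HF0.
    apply (filterlim_comp _ _ _ F (fun x => x ^ k) _ (locally lam) _ Hlim).
    apply (continuous_Rpow (fun x => x)), continuous_id.
Qed.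

(* The potential [psi] used to bound [int F]: along the solution
   [d/dt psi(F t) <= - F t], so [int_1^W F <= psi 1 - psi 0]. *)
Definition denom (eps x : R) : R := (m - 1) * (1 - x) + (1 - lam) * (1 - eps).

Definition psi_slope (eps x : R) : R :=
  INR K / ((m - 1) * eps) + / (1 - eps) ^ K / denom eps x.

Definition psi (eps x : R) : R :=
  INR K / ((m - 1) * eps) * x - / (1 - eps) ^ K * ln (denom eps x) / (m - 1).

Lemma denom_pos (eps x : R) : eps < 1 -> x <= 1 -> 0 < denom eps x.
Proof.
  intros He Hx. unfold denom.
  assert (0 <= (m - 1) * (1 - x)) by (apply Rmult_le_pos; unfold m; lra).
  assert (0 < (1 - lam) * (1 - eps)) by (apply Rmult_lt_0_compat; lra). lra.
Qed.

Lemma psi_derive (eps x : R) : 0 < eps < 1 -> x < 1 ->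
  is_derive (psi eps) x (psi_slope eps x).
Proof.
  intros He Hx. assert (Hd := denom_pos eps x (proj2 He) (Rlt_le _ _ Hx)).
  assert (HpK : 0 < (1 - eps) ^ K) by (apply pow_lt; lra).
  unfold psi, psi_slope, denom in *. unfold Rminus in Hd at 2.
  auto_derive; [exact Hd|]. unfold Rminus in *.
  field. assert (m + - 1 <> 0) by (unfold m; lra). repeat split; lra.
Qed.

Lemma psi_nondecreasing (eps x y : R) : 0 < eps < 1 -> 0 <= x <= y -> y <= 1 ->
  psi eps x <= psi eps y.
Proof.
  intros He Hxy Hy. unfold psi.
  assert (Hm : 0 < m - 1) by (unfold m; lra).
  assert (Ha : 0 <= INR K / ((m - 1) * eps))
    by (apply Rdiv_le_0_compat; [apply pos_INR|apply Rmult_lt_0_compat; lra]).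
  assert (Hb : 0 < / (1 - eps) ^ K) by (apply Rinv_0_lt_compat, pow_lt; lra).
  assert (Hln : ln (denom eps y) <= ln (denom eps x)).
  { apply ln_le; [apply denom_pos; lra|]. unfold denom.
    apply Rplus_le_compat_r, Rmult_le_compat_l; lra. }
  assert (INR K / ((m - 1) * eps) * x <= INR K / ((m - 1) * eps) * y)
    by (apply Rmult_le_compat_l; lra).
  assert (/ (1 - eps) ^ K * ln (denom eps y) <= / (1 - eps) ^ K * ln (denom eps x))
    by (apply Rmult_le_compat_l; lra).
  unfold Rdiv. assert (0 < / (m - 1)) by (apply Rinv_0_lt_compat; lra). nra.
Qed.

Lemma drift_ge_gap (x : R) : 0 <= x <= 1 -> x - f x <= x - lam * f x.
Proof.
  intros Hx. assert (0 <= f x) by (apply (gen_nonneg n p d); auto; lra). nra.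
Qed.

Lemma psi_log_term_bound (eps x : R) : 0 < eps < 1 -> 1 - eps <= x < 1 ->
  1 <= / (1 - eps) ^ K / denom eps x * (x - lam * f x).
Proof.
  intros He Hx.
  assert (Hx01 : 0 <= x <= 1) by lra.
  assert (Hden := denom_pos eps x ltac:(lra) ltac:(lra)).
  assert (HpK : 0 < (1 - eps) ^ K) by (apply pow_lt; lra).
  assert (HxK : (1 - eps) ^ K <= x ^ K) by (apply pow_incr; lra).
  assert (Hlow : (1 - x) * x ^ K * (m - 1) <= x - f x)
    by (apply (gap_lower_near_one n p d K); auto).
  assert (Hpow : x ^ S K <= f x) by (apply (gen_ge_pow n p d K); auto).
  change (x ^ S K) with (x * x ^ K) in Hpow.
  assert (HD : x ^ K * denom eps x <= x - lam * f x).
  { unfold denom.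
    assert ((1 - lam) * (1 - eps) <= (1 - lam) * x) by (apply Rmult_le_compat_l; lra).
    assert ((1 - lam) * (x * x ^ K) <= (1 - lam) * f x) by (apply Rmult_le_compat_l; lra).
    assert (0 <= x ^ K) by (apply pow_le; lra). nra. }
  apply (Rle_trans _ (/ (1 - eps) ^ K / denom eps x * ((1 - eps) ^ K * denom eps x)));
    [right; field; lra|].
  apply Rmult_le_compat_l; [apply Rlt_le, Rdiv_lt_0_compat; [apply Rinv_0_lt_compat|]; lra|].
  eapply Rle_trans; [|exact HD]. apply Rmult_le_compat_r; lra.
Qed.

Lemma psi_linear_term_bound (eps x : R) : 0 < eps < 1 -> 0 <= x < 1 - eps ->
  x <= INR K / ((m - 1) * eps) * (x - lam * f x).
Proof.
  intros He Hx.
  assert (Hm : 0 < m - 1) by (unfold m; lra).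
  assert (HK : 0 < INR K) by (apply lt_0_INR; lia).
  assert (Hlow : x * (1 - x) * (m - 1) / INR K <= x - f x)
    by (apply (gap_lower_uniform n p d K); auto; lra).
  assert (Hgap := drift_ge_gap x ltac:(lra)).
  assert (x * eps * (m - 1) / INR K <= x * (1 - x) * (m - 1) / INR K).
  { unfold Rdiv. apply Rmult_le_compat_r; [apply Rlt_le, Rinv_0_lt_compat; lra|].
    apply Rmult_le_compat_r; [lra|]. apply Rmult_le_compat_l; lra. }
  apply (Rle_trans _ (INR K / ((m - 1) * eps) * (x * eps * (m - 1) / INR K)));
    [right; field; lra|].
  apply Rmult_le_compat_l; [|lra].
  apply Rlt_le, Rdiv_lt_0_compat; [lra|apply Rmult_lt_0_compat; lra].
Qed.

Lemma psi_slope_bound (eps x : R) : 0 < eps < 1 -> 0 < x < 1 ->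
  x <= psi_slope eps x * (x - lam * f x).
Proof.
  intros He Hx.
  assert (Hm : 0 < m - 1) by (unfold m; lra).
  assert (HD : 0 <= x - lam * f x).
  { assert (f x <= x) by (apply (gen_le_id n p d K); auto; lra).
    assert (Hgap := drift_ge_gap x ltac:(lra)). lra. }
  assert (Hlin : 0 <= INR K / ((m - 1) * eps) * (x - lam * f x)).
  { apply Rmult_le_pos; [|exact HD].
    apply Rdiv_le_0_compat; [apply pos_INR|apply Rmult_lt_0_compat; lra]. }
  assert (Hlog : 0 <= / (1 - eps) ^ K / denom eps x * (x - lam * f x)).
  { apply Rmult_le_pos; [|exact HD]. apply Rlt_le, Rdiv_lt_0_compat;
      [apply Rinv_0_lt_compat, pow_lt|apply denom_pos]; lra. }
  unfold psi_slope. rewrite Rmult_plus_distr_r.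
  destruct (Rle_or_lt (1 - eps) x) as [Hnear|Hfar].
  - assert (H := psi_log_term_bound eps x He ltac:(lra)). lra.
  - assert (H := psi_linear_term_bound eps x He ltac:(lra)). lra.
Qed.

Lemma RInt_F_upper (eps W : R) : 0 < eps < 1 -> 1 <= W ->
  RInt F 1 W <= psi eps 1 - psi eps 0.
Proof.
  intros He HW.
  assert (HF : forall t, 0 < t -> 0 < F t < 1) by (intros; split; [apply F_pos|apply F_lt_one]; auto).
  eapply Rle_trans.
  - apply (RInt_le_potential F (fun t => psi eps (F t))
             (fun t => (lam * f (F t) - F t) * psi_slope eps (F t)) 1 W); [lra|apply F_continuous| |].
    + intros t Ht. apply is_derive_Rcomp; [apply psi_derive; [lra|apply HF; lra]|].
      apply F_derive. lra.
    + intros t Ht. assert (Hb := psi_slope_bound eps (F t) He (HF t ltac:(lra))). lra.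
  - assert (HF1 := HF 1 ltac:(lra)). assert (HFW := HF W ltac:(lra)).
    assert (psi eps (F 1) <= psi eps 1) by (apply psi_nondecreasing; lra).
    assert (psi eps 0 <= psi eps (F W)) by (apply psi_nondecreasing; lra).
    lra.
Qed.

(* Uniform bound on the partial integrals of [F^k]: [F^k <= F <= 1]. *)
Lemma partial_integral_upper (k : nat) (eps W : R) : (1 <= k)%nat -> 0 < eps < 1 ->
  0 <= W -> RInt (fun w => F w ^ k) 0 W <= 1 + (psi eps 1 - psi eps 0).
Proof.
  intros Hk He HW. set (W' := Rmax W 1).
  assert (HW' : W <= W' /\ 1 <= W') by (split; [apply Rmax_l|apply Rmax_r]).
  assert (HF : forall t, 0 < t -> 0 <= F t <= 1)
    by (intros; split; [apply Rlt_le, F_pos|apply Rlt_le, F_lt_one]; auto).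
  assert (Hpow_int := F_pow_integrable).
  assert (H1W : ex_RInt (fun w => F w ^ 1) 1 W')
    by (apply (@ex_RInt_Chasles_2 R_CompleteNormedModule _ 0); [lra|apply Hpow_int; lra]).
  assert (HWW : ex_RInt (fun w => F w ^ k) W W')
    by (apply (@ex_RInt_Chasles_2 R_CompleteNormedModule _ 0); [lra|apply Hpow_int; lra]).
  assert (Hsplit : RInt (fun w => F w ^ k) 0 W' =
                   RInt (fun w => F w ^ k) 0 W + RInt (fun w => F w ^ k) W W')
    by (symmetry; apply (@RInt_Chasles R_CompleteNormedModule (fun w => F w ^ k)); [apply Hpow_int; lra|exact HWW]).
  assert (0 <= RInt (fun w => F w ^ k) W W').
  { apply RInt_ge_0; [lra|exact HWW|]. intros x Hx. apply pow_le, HF. lra. }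
  assert (RInt (fun w => F w ^ k) 0 W' <= RInt (fun w => F w ^ 1) 0 W').
  { apply RInt_le; [lra|apply Hpow_int; lra|apply Hpow_int; lra|].
    intros x Hx. apply pow_antimono; [apply HF; lra|exact Hk]. }
  assert (Hsplit1 : RInt (fun w => F w ^ 1) 0 W' =
                    RInt (fun w => F w ^ 1) 0 1 + RInt (fun w => F w ^ 1) 1 W')
    by (symmetry; apply (@RInt_Chasles R_CompleteNormedModule (fun w => F w ^ 1)); [apply Hpow_int; lra|exact H1W]).
  assert (RInt (fun w => F w ^ 1) 0 1 <= 1).
  { apply (Rle_trans _ (RInt (fun _ => 1) 0 1)); [|rewrite RInt_const_R; lra].
    apply RInt_le; [lra|apply Hpow_int; lra|apply ex_RInt_const|].
    intros x Hx. assert (HFx := HF x ltac:(lra)). simpl. lra. }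
  assert (RInt (fun w => F w ^ 1) 1 W' <= psi eps 1 - psi eps 0).
  { rewrite (RInt_ext _ F) by (intros; simpl; ring). apply RInt_F_upper; lra. }
  lra.
Qed.

Lemma EWi_sup (k : nat) : (1 <= k)%nat ->
  (forall W, 0 <= W -> RInt (fun w => F w ^ k) 0 W <= EWi F k) /\
  (forall eps, 0 < eps < 1 -> EWi F k <= 1 + (psi eps 1 - psi eps 0)).
Proof.
  intros Hk. assert (Hhalf : 0 < 1 / 2 < 1) by lra.
  destruct (RInt_gen_nonneg_sup (fun w => F w ^ k)) as [Hle Hleast].
  - intros x Hx. apply pow_le, Rlt_le, F_pos, Hx.
  - apply F_pow_integrable.
  - exists (1 + (psi (1 / 2) 1 - psi (1 / 2) 0)).
    intros W HW. apply partial_integral_upper; auto.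
  - split; [exact Hle|]. intros eps He. apply Hleast.
    intros W HW. apply partial_integral_upper; auto.
Qed.

Lemma EWi_nonneg (k : nat) : (1 <= k)%nat -> 0 <= EWi F k.
Proof.
  intros Hk. eapply Rle_trans; [|apply (proj1 (EWi_sup k Hk) 0 (Rle_refl 0))].
  rewrite RInt_point. apply Rle_refl.
Qed.

Lemma EWi_upper (k : nat) (eps : R) : (1 <= k)%nat -> 0 < eps < 1 ->
  EWi F k <= 1 + INR K / ((m - 1) * eps)
             + / (1 - eps) ^ K * (ln m - ln (1 - eps) - ln (1 - lam)) / (m - 1).
Proof.
  intros Hk He. eapply Rle_trans; [apply (proj2 (EWi_sup k Hk) eps He)|].
  assert (Hm : 0 < m - 1) by (unfold m; lra).
  set (c := (1 - lam) * (1 - eps)).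
  assert (Hc : 0 < c <= 1).
  { unfold c. split; [apply Rmult_lt_0_compat; lra|].
    rewrite <- (Rmult_1_r 1). apply Rmult_le_compat; lra. }
  assert (Hd1 : denom eps 1 = c) by (unfold denom, c; ring).
  assert (Hd0 : denom eps 0 = m - 1 + c) by (unfold denom, c; ring).
  assert (Hlc : ln c = ln (1 - lam) + ln (1 - eps)) by (apply ln_mult; lra).
  assert (Hlm : ln (m - 1 + c) <= ln m) by (apply ln_le; lra).
  assert (Hb : 0 < / (1 - eps) ^ K) by (apply Rinv_0_lt_compat, pow_lt; lra).
  assert (/ (1 - eps) ^ K * ln (m - 1 + c) <= / (1 - eps) ^ K * ln m)
    by (apply Rmult_le_compat_l; lra).
  unfold psi. rewrite Hd1, Hd0, Hlc. unfold Rdiv.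
  assert (0 < / (m - 1)) by (apply Rinv_0_lt_compat; lra). nra.
Qed.

Lemma EWi_lower (k : nat) (del T : R) : (1 <= k)%nat -> 0 < del < 1 -> 0 <= T ->
  (1 - lam) * (2 + / (m - 1)) * exp ((m - 1) * T) <= del ->
  T * (1 - del) ^ k <= EWi F k.
Proof.
  intros Hk Hd HT Hc.
  assert (Hm : 0 < m - 1) by (unfold m; lra).
  eapply Rle_trans; [|apply (proj1 (EWi_sup k Hk) T HT)].
  rewrite <- (Rminus_0_r T) at 1. rewrite <- RInt_const_R.
  apply RInt_le; [exact HT|apply ex_RInt_const|apply F_pow_integrable, HT|].
  intros x Hx. apply pow_incr. split; [lra|].
  assert (Hb := one_minus_F_bound x ltac:(lra)).
  assert (exp ((m - 1) * x) <= exp ((m - 1) * T))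
    by (apply exp_le_compat, Rmult_le_compat_l; lra).
  assert (0 < (1 - lam) * (2 + / (m - 1)))
    by (apply Rmult_lt_0_compat; [lra|]; assert (0 < / (m - 1)) by (apply Rinv_0_lt_compat; lra); lra).
  assert ((1 - lam) * (2 + / (m - 1)) * exp ((m - 1) * x) <=
          (1 - lam) * (2 + / (m - 1)) * exp ((m - 1) * T)) by (apply Rmult_le_compat_l; lra).
  lra.
Qed.

End Solution.

(* [E lam ~ L * (- ln (1 - lam))], in the quantitative form in which the
   bounds are proved: for every [eta], up to an additive constant,
   [(1 - eta) L t <= E <= (1 + eta) L t] with [t = - ln (1 - lam)]. *)
Definition log_order (E : R -> R) (L : R) : Prop :=
  (forall eta, 0 < eta -> exists C, forall lam, 0 < lam < 1 ->
     E lam <= (1 + eta) * L * - ln (1 - lam) + C) /\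
  (forall eta, 0 < eta < 1 -> exists C, forall lam, 0 < lam < 1 ->
     (1 - eta) * L * - ln (1 - lam) - C <= E lam).

Lemma minus_ln_pos (lam : R) : 0 < lam < 1 -> 0 < - ln (1 - lam).
Proof.
  intros Hl. enough (ln (1 - lam) < 0) by lra.
  rewrite <- ln_1. apply ln_increasing; lra.
Qed.

Lemma minus_ln_blowup (M : R) :
  at_left 1 (fun lam => 0 < lam < 1 /\ M < - ln (1 - lam)).
Proof.
  assert (He : 0 < Rmin (exp (- M)) 1) by (apply Rmin_glb_lt; [apply exp_pos|lra]).
  exists (mkposreal _ He). intros y Hy Hy1. simpl in Hy.
  change (Rabs (y - 1) < Rmin (exp (- M)) 1) in Hy. apply Rabs_def2 in Hy.
  assert (Hmin1 := Rmin_r (exp (- M)) 1). assert (Hmin2 := Rmin_l (exp (- M)) 1).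
  split; [lra|].
  assert (ln (1 - y) < ln (exp (- M))) by (apply ln_increasing; lra).
  rewrite ln_exp in H. lra.
Qed.

Lemma log_order_limit (E : R -> R) (L : R) : 0 < L -> log_order E L ->
  filterlim (fun lam => - E lam / ln (1 - lam)) (at_left 1) (locally L).
Proof.
  intros HL [Hup Hlow]. apply filterlim_locally. intros [eps Heps].
  set (eta := Rmin (eps / (2 * L)) (1 / 2)).
  assert (Heta : 0 < eta <= eps / (2 * L) /\ eta <= 1 / 2).
  { split; [split|]; [apply Rmin_glb_lt; [apply Rdiv_lt_0_compat|]; lra|apply Rmin_l|apply Rmin_r]. }
  assert (HetaL : eta * L <= eps / 2).
  { replace (eps / 2) with (eps / (2 * L) * L) by (field; lra).
    apply Rmult_le_compat_r; lra. }
  destruct (Hup eta ltac:(lra)) as [C1 HC1].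
  destruct (Hlow eta ltac:(lra)) as [C2 HC2].
  eapply filter_imp; [|exact (minus_ln_blowup (2 * (Rabs C1 + Rabs C2) / eps))].
  intros lam [Hl Ht]. specialize (HC1 lam Hl). specialize (HC2 lam Hl).
  set (t := - ln (1 - lam)) in *.
  assert (Ht0 : 0 < t) by apply minus_ln_pos, Hl.
  assert (HCt : 2 * (Rabs C1 + Rabs C2) < eps * t).
  { apply (Rmult_lt_compat_l eps) in Ht; [|lra].
    replace (eps * (2 * (Rabs C1 + Rabs C2) / eps)) with (2 * (Rabs C1 + Rabs C2))
      in Ht by (field; lra). exact Ht. }
  assert (HC1p := Rabs_pos C1). assert (HC2p := Rabs_pos C2).
  assert (HC1a := Rle_abs C1). assert (HC2a := Rle_abs C2).
  change (Rabs (- E lam / ln (1 - lam) - L) < eps).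
  assert (Hln : ln (1 - lam) = - t) by (unfold t; ring).
  rewrite Hln. replace (- E lam / - t) with (E lam / t) by (field; lra).
  set (u := E lam / t).
  assert (Hu : E lam = u * t) by (unfold u; field; lra).
  rewrite Hu in HC1, HC2.
  assert (eta * L * t <= eps / 2 * t) by (apply Rmult_le_compat_r; lra).
  apply Rabs_def1.
  - assert (Hneg : (u - L - eps) * t < 0) by lra.
    destruct (Rlt_or_le (u - L) eps) as [Hlt|Hge]; [exact Hlt|].
    assert (0 <= (u - L - eps) * t) by (apply Rmult_le_pos; lra). lra.
  - assert (Hneg : (L - eps - u) * t < 0) by lra.
    destruct (Rlt_or_le (- eps) (u - L)) as [Hlt|Hge]; [exact Hlt|].
    assert (0 <= (L - eps - u) * t) by (apply Rmult_le_pos; lra). lra.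
Qed.

Lemma log_order_shift (E : R -> R) (L c : R) :
  log_order E L -> log_order (fun lam => c + E lam) L.
Proof.
  intros [Hup Hlow]. split.
  - intros eta He. destruct (Hup eta He) as [C HC].
    exists (c + C). intros lam Hl. specialize (HC lam Hl). lra.
  - intros eta He. destruct (Hlow eta He) as [C HC].
    exists (C - c). intros lam Hl. specialize (HC lam Hl). lra.
Qed.

Lemma log_order_mixture (n : nat) (p : nat -> R) (E : nat -> R -> R) (L : R) :
  (forall i, (i < n)%nat -> 0 <= p i) -> sumR n p = 1 ->
  (forall i, (i < n)%nat -> log_order (E i) L) ->
  log_order (fun lam => sumR n (fun i => p i * E i lam)) L.
Proof.
  intros Hp Hs HE.
  assert (Hmix : forall (A : R) (C : nat -> R),
             sumR n (fun i => p i * (A + C i)) = A + sumR n (fun i => p i * C i)).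
  { intros A C.
    rewrite (sumR_ext n _ (fun i => p i * A + p i * C i)) by (intros; ring).
    rewrite sumR_plus, (sumR_weights n p A Hs). reflexivity. }
  split.
  - intros eta He.
    destruct (finite_choice n (fun i C => forall lam, 0 < lam < 1 ->
                E i lam <= (1 + eta) * L * - ln (1 - lam) + C)) as [C HC].
    { intros i Hi. exact (proj1 (HE i Hi) eta He). }
    exists (sumR n (fun i => p i * C i)). intros lam Hl.
    rewrite <- Hmix. apply sumR_le. intros i Hi.
    apply Rmult_le_compat_l; [auto|]. apply HC; auto.
  - intros eta He.
    destruct (finite_choice n (fun i C => forall lam, 0 < lam < 1 ->
                (1 - eta) * L * - ln (1 - lam) - C <= E i lam)) as [C HC].
    { intros i Hi. exact (proj2 (HE i Hi) eta He). }
    exists (sumR n (fun i => p i * C i)). intros lam Hl.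
    replace ((1 - eta) * L * - ln (1 - lam) - sumR n (fun i => p i * C i))
      with (sumR n (fun i => p i * ((1 - eta) * L * - ln (1 - lam) + - C i))).
    + apply sumR_le. intros i Hi.
      apply Rmult_le_compat_l; [auto|]. specialize (HC i Hi lam Hl). lra.
    + rewrite Hmix. rewrite (sumR_ext n (fun i => p i * - C i) (fun i => - (1) * (p i * C i)))
        by (intros; ring).
      rewrite sumR_scal. ring.
Qed.

Section WaitingTime.

Variables (n : nat) (p : nat -> R) (d : nat -> nat) (K : nat).
Hypothesis p_nonneg : forall i, (i < n)%nat -> 0 <= p i.
Hypothesis p_sum : sumR n p = 1.
Hypothesis d_range : forall i, (i < n)%nat -> (1 <= d i <= K)%nat.
Hypothesis K_pos : (1 <= K)%nat.
Hypothesis mean_gt_one : mean n p d > 1.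

Variable Fbar : R -> R -> R.
Hypothesis Fbar_ode : forall lam, 0 < lam < 1 -> solves_ode n p d lam (Fbar lam).

Let m := mean n p d.

(* Upper half of [E[W^(k)] ~ -ln(1-lam)/(m-1)]: take [eps] so small that
   [(1 - eps)^-K <= 1 + eta] in the explicit bound [EWi_upper]. *)
Lemma EWi_log_upper (k : nat) (eta : R) : (1 <= k)%nat -> 0 < eta ->
  exists C, forall lam, 0 < lam < 1 ->
    EWi (Fbar lam) k <= (1 + eta) * / (m - 1) * - ln (1 - lam) + C.
Proof.
  intros Hk Heta.
  assert (Hm : 0 < m - 1) by (unfold m; lra).
  assert (HK : 1 <= INR K) by (apply (le_INR 1); lia).
  set (eps := eta / ((1 + eta) * (INR K + 1))).
  assert (He : 0 < eps < 1).
  { unfold eps. split; [apply Rdiv_lt_0_compat; nra|].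
    apply (Rmult_lt_reg_r ((1 + eta) * (INR K + 1))); [nra|].
    unfold Rdiv. rewrite Rmult_assoc, Rinv_l by nra. nra. }
  set (B := / (1 - eps) ^ K).
  assert (HpK : 0 < (1 - eps) ^ K) by (apply pow_lt; lra).
  assert (HB : 0 < B <= 1 + eta).
  { split; [apply Rinv_0_lt_compat, HpK|].
    assert (Hbern := bernoulli_minus eps K ltac:(lra)).
    assert (INR K * eps <= eta / (1 + eta)).
    { unfold eps. apply (Rmult_le_reg_r ((1 + eta) * (INR K + 1))); [nra|].
      field_simplify; [nra|lra|nra]. }
    assert (1 / (1 + eta) <= (1 - eps) ^ K).
    { replace (1 / (1 + eta)) with (1 - eta / (1 + eta)) by (field; lra). lra. }
    unfold B. apply (Rmult_le_reg_r ((1 - eps) ^ K)); [exact HpK|].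
    rewrite Rinv_l by lra.
    apply (Rle_trans _ ((1 + eta) * (1 / (1 + eta)))); [right; field; lra|].
    apply Rmult_le_compat_l; lra. }
  assert (Hln : ln (1 - eps) < ln m) by (apply ln_increasing; unfold m in *; lra).
  exists (1 + INR K / ((m - 1) * eps) + B * (ln m - ln (1 - eps)) / (m - 1)).
  intros lam Hl.
  assert (Hup := EWi_upper n p d K p_nonneg p_sum d_range K_pos mean_gt_one
                   lam (Fbar lam) Hl (Fbar_ode lam Hl) k eps Hk He).
  fold m B in Hup.
  assert (Ht := minus_ln_pos lam Hl).
  assert (B * - ln (1 - lam) <= (1 + eta) * - ln (1 - lam))
    by (apply Rmult_le_compat_r; lra).
  assert (0 < / (m - 1)) by (apply Rinv_0_lt_compat; lra).
  unfold Rdiv in *. nra.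
Qed.

(* Lower half: with [del = eta / K], [F >= 1 - del] for a time
   [T = (t - ln((2 + 1/(m-1))/del)) / (m-1)], where [t = -ln(1-lam)]. *)
Lemma EWi_log_lower (k : nat) (eta : R) : (1 <= k <= K)%nat -> 0 < eta < 1 ->
  exists C, forall lam, 0 < lam < 1 ->
    (1 - eta) * / (m - 1) * - ln (1 - lam) - C <= EWi (Fbar lam) k.
Proof.
  intros Hk Heta.
  assert (Hm : 0 < m - 1) by (unfold m; lra).
  set (L := / (m - 1)). assert (HL : 0 < L) by (apply Rinv_0_lt_compat; lra).
  assert (HK : 1 <= INR K) by (apply (le_INR 1); lia).
  set (del := eta / INR K).
  assert (Hd : 0 < del < 1).
  { unfold del. split; [apply Rdiv_lt_0_compat; lra|].
    apply (Rmult_lt_reg_r (INR K)); [lra|]. unfold Rdiv.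
    rewrite Rmult_assoc, Rinv_l by lra. lra. }
  assert (Hpow : 1 - eta <= (1 - del) ^ k).
  { assert (Hbern := bernoulli_minus del k ltac:(lra)).
    assert (INR k * del <= INR K * del)
      by (apply Rmult_le_compat_r; [lra|apply le_INR; lia]).
    replace (INR K * del) with eta in * by (unfold del; field; lra). lra. }
  set (C0 := 2 + L). set (c := ln C0 - ln del).
  assert (Hc : 0 < c) by (unfold c; assert (ln del < ln C0) by (apply ln_increasing; unfold C0; lra); lra).
  exists (L * c). intros lam Hl.
  assert (Hnn := EWi_nonneg n p d K p_nonneg p_sum d_range K_pos mean_gt_one
                   lam (Fbar lam) Hl (Fbar_ode lam Hl) k (proj1 Hk)).
  set (t := - ln (1 - lam)).
  destruct (Rle_or_lt t c) as [Htc|Htc].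
  - assert (Ht0 : 0 <= t) by apply Rlt_le, minus_ln_pos, Hl.
    assert (0 <= eta * L * t) by (apply Rmult_le_pos; [apply Rmult_le_pos|]; lra).
    assert (L * t <= L * c) by (apply Rmult_le_compat_l; lra).
    lra.
  - set (T := L * (t - c)).
    assert (HT : 0 <= T) by (unfold T; apply Rmult_le_pos; lra).
    assert (Htime : (1 - lam) * (2 + / (m - 1)) * exp ((m - 1) * T) = del).
    { assert (Et : exp t = / (1 - lam)) by (unfold t; rewrite exp_Ropp, exp_ln; lra).
      assert (Ec : exp (- c) = del / C0).
      { unfold c. replace (- (ln C0 - ln del)) with (ln del + - ln C0) by ring.
        rewrite exp_plus, exp_Ropp, !exp_ln by (unfold C0; lra). reflexivity. }
      replace ((m - 1) * T) with (t + - c) by (unfold T, L; field; lra).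
      rewrite exp_plus, Et, Ec. fold L C0. field. split; [unfold C0|]; lra. }
    assert (Hlow := EWi_lower n p d K p_nonneg p_sum d_range K_pos mean_gt_one
                      lam (Fbar lam) Hl (Fbar_ode lam Hl) k del T (proj1 Hk) Hd HT
                      (Req_le _ _ Htime)).
    assert (T * (1 - eta) <= T * (1 - del) ^ k) by (apply Rmult_le_compat_l; lra).
    replace (T * (1 - eta)) with ((1 - eta) * L * t - (1 - eta) * (L * c)) in H
      by (unfold T; ring).
    assert (0 <= eta * (L * c)) by (apply Rmult_le_pos; [|apply Rmult_le_pos]; lra).
    lra.
Qed.

Lemma EWi_log_order (k : nat) : (1 <= k <= K)%nat ->
  log_order (fun lam => EWi (Fbar lam) k) (/ (m - 1)).
Proof.
  intros Hk. split.
  - intros eta He. apply EWi_log_upper; [lia|exact He].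
  - intros eta He. apply EWi_log_lower; assumption.
Qed.

End WaitingTime.

Lemma degree_bound (n : nat) (d : nat -> nat) :
  exists K, (1 <= K)%nat /\ forall i, (i < n)%nat -> (d i <= K)%nat.
Proof.
  induction n as [|n [K [HK H]]]; [exists 1%nat; split; intros; lia|].
  exists (Nat.max K (d n)). split; [lia|]. intros i Hi.
  destruct (Nat.eq_dec i n) as [->|Hne]; [lia|]. specialize (H i ltac:(lia)). lia.
Qed.

Theorem theorem4p3 (n : nat) (p : nat -> R) (d : nat -> nat)
  (Fbar : R -> R -> R) :
  (forall i, (i < n)%nat -> 0 <= p i) ->
  sumR n p = 1 ->
  (forall i, (i < n)%nat -> (1 <= d i)%nat) ->
  sumR n (fun i => p i * INR (d i)) > 1 ->
  (forall lam, 0 < lam < 1 -> solves_ode n p d lam (Fbar lam)) ->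
  let L := / (sumR n (fun i => p i * INR (d i)) - 1) in
  (forall i, (i < n)%nat ->
     filterlim (fun lam => - ERi (Fbar lam) (d i) / ln (1 - lam))
       (at_left 1) (locally L) /\
     filterlim (fun lam => - EWi (Fbar lam) (d i) / ln (1 - lam))
       (at_left 1) (locally L)) /\
  filterlim (fun lam => - ER n p d (Fbar lam) / ln (1 - lam))
    (at_left 1) (locally L) /\
  filterlim (fun lam => - EW n p d (Fbar lam) / ln (1 - lam))
    (at_left 1) (locally L).
Proof.
  intros Hp Hs Hd Hm Hsol L.
  destruct (degree_bound n d) as [K [HK HdK]].
  assert (Hrange : forall i, (i < n)%nat -> (1 <= d i <= K)%nat)
    by (intros i Hi; split; [apply Hd|apply HdK]; exact Hi).
  assert (HL : 0 < L) by (apply Rinv_0_lt_compat; lra).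
  assert (HWi : forall i, (i < n)%nat -> log_order (fun lam => EWi (Fbar lam) (d i)) L)
    by (intros i Hi; exact (EWi_log_order n p d K Hp Hs Hrange HK Hm Fbar Hsol (d i) (Hrange i Hi))).
  assert (HW : log_order (fun lam => EW n p d (Fbar lam)) L)
    by exact (log_order_mixture n p (fun i lam => EWi (Fbar lam) (d i)) L Hp Hs HWi).
  split; [|split].
  - intros i Hi. split; apply log_order_limit; auto.
    exact (log_order_shift _ L 1 (HWi i Hi)).
  - apply log_order_limit; [exact HL|]. exact (log_order_shift _ L 1 HW).
  - apply log_order_limit; assumption.
Qed.
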